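(* Let $G$ be a $6$-regular graph, $\mathcal S$ a canonical path partition of $G$, and $P$ a path component with end-vertices $o_1,o_2$. Let $x_1,x_2\in V_2$ be path neighbors on $P$, with $x_1$ immediately preceding $x_2$ when $P$ is traversed from $o_1$ to $o_2$. If $x_1$ goes to $o_2$, then $o_2$ is the only vertex that $x_2$ goes to.
   Context: All graphs are finite, simple and undirected. A path partition of $G=(V,E)$ is a set of vertex-disjoint paths (single vertices allowed) covering $V$; its members are components. A component with $t\ge3$ vertices is a cycle component if the subgraph induced on its vertex set has a spanning cycle; a one-vertex component is an isolated vertex; every other component is a path component. A path partition is canonical if (1) it has the minimum number of components among all path partitions of $G$; (2) among those, it has the maximum number of cycle components; (3) it has no isolated vertices. Given a canonical path partition $\mathcal S$ of $G$: two vertices are path neighbors if they are consecutive on a path component. An edge of $G$ is a free edge unless it joins two path neighbors or has both endpoints in the same cycle component. $V_1$ is the set of end-vertices of path components together with all vertices of cycle components. $V_2$ is the set of vertices not in $V_1$ that are joined by a free edge to a vertex of $V_1$. A balanced edge is a free edge with one endpoint in $V_1$ and the other in $V_2$; for $x\in V_2$, $y\in V_1$ we say $x$ goes to $y$ if $xy$ is a balanced edge. *)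

From mathcomp Require Import all_boot.
Set Implicit Arguments. Unset Strict Implicit. Unset Printing Implicit Defensive.

Section PathPartitions.
Variables (T : finType) (e : rel T).

Definition simple_graph : Prop := symmetric e /\ irreflexive e.

Definition regular (k : nat) : Prop := forall v : T, #|[set w | e v w]| = k.

Definition is_gpath (p : seq T) : bool :=
  if p is x :: q then path e x q else false.

Definition path_partition (S : seq (seq T)) : Prop :=
  all is_gpath S /\ perm_eq (flatten S) (enum T).

(* Cycle component: t >= 3 vertices and the induced subgraph on its vertex
   set has a spanning cycle (some ordering of its vertices is an e-cycle). *)
Definition cycle_comp (p : seq T) : bool :=
  (2 < size p) && has (cycle e) (permutations p).

Definition isolated_comp (p : seq T) : bool := size p == 1.

Definition path_comp (p : seq T) : bool :=
  ~~ cycle_comp p && ~~ isolated_comp p.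

Definition canonical (S : seq (seq T)) : Prop :=
  [/\ path_partition S,
      (forall S', path_partition S' -> size S <= size S'),
      (forall S', path_partition S' -> size S' = size S ->
          count cycle_comp S' <= count cycle_comp S) &
      ~~ has isolated_comp S].

Variable S : seq (seq T).

Definition path_nb (u v : T) : Prop :=
  exists p, [/\ p \in S, path_comp p &
     exists a b, p = a ++ u :: v :: b \/ p = a ++ v :: u :: b].

Definition same_cycle_comp (u v : T) : Prop :=
  exists p, [/\ p \in S, cycle_comp p, u \in p & v \in p].

Definition free_edge (u v : T) : Prop :=
  [/\ e u v, ~ path_nb u v & ~ same_cycle_comp u v].

Definition inV1 (v : T) : Prop :=
  (exists p, [/\ p \in S, path_comp p &
      (exists q, p = v :: q) \/ (exists q, p = rcons q v)])
  \/ (exists p, [/\ p \in S, cycle_comp p & v \in p]).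

Definition inV2 (x : T) : Prop :=
  ~ inV1 x /\ exists y, inV1 y /\ free_edge x y.

Definition balanced_edge (u v : T) : Prop :=
  free_edge u v /\ ((inV1 u /\ inV2 v) \/ (inV2 u /\ inV1 v)).

Definition goes_to (x y : T) : Prop :=
  [/\ inV2 x, inV1 y & balanced_edge x y].

End PathPartitions.

From mathcomp Require Import all_boot.
Set Implicit Arguments. Unset Strict Implicit. Unset Printing Implicit Defensive.

(* Reversing the part of P after x1 and using the edge x1 o2 (a Posa rotation)
   turns P into a spanning path of V(P) from o1 to x2.  An edge from x2 to a
   vertex y of V1 other than o2 would then either close this path into a
   spanning cycle (y = o1), contradicting that P is a path component, or
   extend it by a spanning path of the component of y, which would merge two
   components and contradict the minimality of S. *)

Section SymmetricPaths.
Variables (T : finType) (e : rel T).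
Hypothesis sym_e : symmetric e.

Lemma path_rev_sym x p : path e x p -> path e (last x p) (rev (belast x p)).
Proof. by rewrite rev_path (@eq_path _ _ e) // => u v; exact: sym_e. Qed.

Lemma is_gpath_rev p : is_gpath e p -> is_gpath e (rev p).
Proof. by case: p => [//|x q] /= pq; rewrite lastI rev_rcons; exact: path_rev_sym. Qed.

Lemma path_rotate x a u v b :
  path e x (a ++ u :: v :: b) -> e u (last v b) ->
  path e x (a ++ u :: rev (v :: b)).
Proof.
rewrite !cat_path /= => /and3P[-> -> /andP[_ pvb]] u_lst /=.
by rewrite lastI rev_rcons /= u_lst (path_rev_sym pvb).
Qed.

End SymmetricPaths.

Section Components.
Variables (T : finType) (e : rel T).

Definition end_vertex (p : seq T) (v : T) : Prop :=
  (exists q, p = v :: q) \/ (exists q, p = rcons q v).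

Lemma end_vertex_rev p v : end_vertex (rev p) v <-> end_vertex p v.
Proof.
suff revP q : end_vertex q v -> end_vertex (rev q) v.
  by split=> /revP; rewrite ?revK.
case=> -[r ->]; first by right; exists (rev r); rewrite rev_cons.
by left; exists (rev r); rewrite rev_rcons.
Qed.

Lemma end_vertex_cons_rcons x m z v :
  end_vertex (x :: rcons m z) v -> v = x \/ v = z.
Proof.
case=> -[r]; first by case=> ->; left.
by move/(congr1 (last x)); rewrite /= !last_rcons => ->; right.
Qed.

Lemma end_vertex_spanning_start p v : symmetric e ->
  is_gpath e p -> end_vertex p v -> exists2 q, perm_eq (v :: q) p & path e v q.
Proof.
move=> sym_e gp [[q pE] | [q pE]]; first by exists q; [rewrite pE | move: gp; rewrite pE].
exists (rev q); first by rewrite -rev_rcons -pE perm_rev.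
by move: (is_gpath_rev sym_e gp); rewrite pE rev_rcons.
Qed.

Lemma cycle_comp_spanning_start p v : cycle_comp e p -> v \in p ->
  exists2 q, perm_eq (v :: q) p & path e v q.
Proof.
case/andP=> _ /hasP[c]; rewrite mem_permutations => cp c_cyc vp.
have vc : v \in c by rewrite (perm_mem cp).
have [i q rot_c] := rot_to vc.
exists q; first by rewrite -rot_c perm_rot.
by move: c_cyc; rewrite -(rot_cycle i) rot_c /= rcons_path => /andP[].
Qed.

Lemma inV1_spanning_start S v : symmetric e -> path_partition e S ->
  inV1 e S v -> exists2 R, R \in S &
    (cycle_comp e R \/ end_vertex R v) /\
    exists2 q, perm_eq (v :: q) R & path e v q.
Proof.
move=> sym_e [gS _] [[R [RS _ endR]] | [R [RS cR vR]]]; exists R => //; split.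
- by right.
- exact: end_vertex_spanning_start (allP gS R RS) endR.
- by left.
- exact: cycle_comp_spanning_start.
Qed.

Lemma path_partition_join S P R p r :
  path_partition e S -> P \in S -> R \in S -> R != P ->
  perm_eq p P -> perm_eq r R -> is_gpath e (p ++ r) ->
  exists2 S', path_partition e S' & size S' < size S.
Proof.
move=> [gS permS] PS RS RP pP rR gpr.
pose X := rem R (rem P S).
have S_PRX : perm_eq S (P :: R :: X).
  by apply: perm_trans (perm_to_rem PS) _; rewrite perm_cons perm_to_rem ?rem_mem.
exists ((p ++ r) :: X); last by rewrite (perm_size S_PRX).
split.
  rewrite /= gpr; apply/allP => c cX; apply: (allP gS).
  by rewrite (perm_mem S_PRX) !inE cX !orbT.
apply: perm_trans permS; rewrite (permPr (perm_flatten S_PRX)) /= catA.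
by apply: perm_cat => //; apply: perm_cat.
Qed.

Lemma canonical_spanning_path_last_adj S P o q y :
  symmetric e -> canonical e S -> P \in S -> path_comp e P -> 2 < size P ->
  perm_eq (o :: q) P -> path e o q -> inV1 e S y -> e (last o q) y ->
  y != o /\ end_vertex P y.
Proof.
move=> sym_e [ppS minS _ _] PS Pc Pgt2 oqP oq y1 lst_y.
have [R RS [cR_or_end [r yrR yr]]] := inV1_spanning_start sym_e ppS y1.
have [RP | RP] := eqVneq R P; last first.
  have gpr : is_gpath e ((o :: q) ++ y :: r) by rewrite /= cat_path oq /= lst_y.
  have [S' ppS' ltS'] := path_partition_join ppS PS RS RP oqP yrR gpr.
  by have := minS S' ppS'; rewrite leqNgt ltS'.
subst R; have nPc : ~~ cycle_comp e P by case/andP: Pc.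
case: cR_or_end => [cP | endP]; first by rewrite cP in nPc.
split=> //; apply: (contraNneq _ nPc) => yo.
rewrite /cycle_comp Pgt2; apply/hasP; exists (o :: q).
  by rewrite mem_permutations.
by subst y; rewrite /= rcons_path oq lst_y.
Qed.

End Components.

Theorem mainTheorem6 (T : finType) (e : rel T) (S : seq (seq T))
    (P Q : seq T) (o1 o2 x1 x2 : T) :
  simple_graph e -> regular e 6 -> canonical e S ->
  P \in S -> path_comp e P ->
  (Q = P \/ Q = rev P) ->
  (exists m, Q = o1 :: rcons m o2) ->
  inV2 e S x1 -> inV2 e S x2 ->
  (exists a b, Q = a ++ x1 :: x2 :: b) ->
  goes_to e S x1 o2 ->
  goes_to e S x2 o2 /\ (forall y, goes_to e S x2 y -> y = o2).
Proof.
move=> [sym_e _] _ canS PS Pc QP [m Qe] x1V2 x2V2 [a [b Qx]] x1o2.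
have [[gS _] _ _ _] := canS.
have endQ v : end_vertex P v <-> end_vertex Q v.
  by case: QP => ->; [exact: iff_refl | exact: iff_sym (end_vertex_rev _ _)].
have o1V1 : inV1 e S o1.
  by left; exists P; split=> //; apply/endQ; rewrite Qe; left; eexists.
have last_b : last x2 b = o2.
  by move: (congr1 (last o1) Qx); rewrite Qe /= last_rcons last_cat /= => <-.
have [a' Ea] : exists a', a = o1 :: a'.
  case: a Qx => [|a0 a']; rewrite Qe => /= -[hE _]; last by exists a'; rewrite hE.
  by case: x1V2; rewrite -hE.
pose q := a' ++ x1 :: rev (x2 :: b).
have oq : path e o1 q.
  have gQ : is_gpath e Q by case: QP => ->; [|apply: (is_gpath_rev sym_e)]; exact: (allP gS).
  move: gQ; rewrite Qx Ea => /(path_rotate sym_e); apply.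
  by rewrite last_b; case: x1o2 => _ _ [[]].
have qP : perm_eq (o1 :: q) P.
  apply: (@perm_trans _ Q); last by case: QP => ->; rewrite ?perm_rev.
  by rewrite Qx Ea /= perm_cons perm_cat2l perm_cons perm_rev.
have Pgt2 : 2 < size P by rewrite -(perm_size qP) /= size_cat /= size_rev /= !addnS.
have last_q : last o1 q = x2 by rewrite last_cat /= rev_cons last_rcons.
have nbr_o2 y : inV1 e S y -> e x2 y -> y = o2.
  move=> y1; rewrite -last_q => x2y.
  have [yo1 /endQ] :=
    canonical_spanning_path_last_adj sym_e canS PS Pc Pgt2 qP oq y1 x2y.
  rewrite Qe => /end_vertex_cons_rcons[yE|//].
  by rewrite yE eqxx in yo1.
split=> [| y [_ y1 [[x2y _ _] _]]]; last exact: nbr_o2.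
have [_ [y [y1 fxy]]] := x2V2.
have yo2 : y = o2 by case: fxy => x2y _ _; exact: nbr_o2.
by subst y; split=> //; split=> //; right.
Qed.
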